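(* Let $\mu\ge 1$, $x\ge 0$, $y>0$. Then $\dfrac{\partial^2 Q_{\mu}(x,y)}{\partial y^2}>0$ if $y>x+\mu-1$, and $\dfrac{\partial^2 Q_{\mu}(x,y)}{\partial y^2}<0$ if $y<x+\mu-2$. If moreover $\mu\ge 3/2$, then $\dfrac{\partial^2 Q_{\mu}(x,y)}{\partial y^2}<0$ whenever $y<x+\mu-3/2$.
   Context: For real $\mu$, $x>0$, $y\ge 0$, the generalized Marcum $Q$-function is $Q_{\mu}(x,y)=x^{\frac12(1-\mu)}\int_y^{\infty} t^{\frac12(\mu-1)}e^{-t-x}I_{\mu-1}(2\sqrt{xt})\,dt$, where $I_\nu$ is the modified Bessel function of the first kind; at $x=0$ it is defined by continuity, $Q_\mu(0,y)=\Gamma(\mu,y)/\Gamma(\mu)$. *)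

From Stdlib Require Import Reals Factorial.
From Coquelicot Require Import Coquelicot.
Open Scope R_scope.

Definition Gamma (s : R) : R :=
  RInt_gen (fun t => Rpower t (s - 1) * exp (- t)) (at_point 0) (Rbar_locally p_infty).

Definition upper_Gamma (s y : R) : R :=
  RInt_gen (fun t => Rpower t (s - 1) * exp (- t)) (at_point y) (Rbar_locally p_infty).

Definition besselI (nu z : R) : R :=
  Series (fun k : nat =>
    (z / 2) ^ (2 * k) * Rpower (z / 2) nu / (INR (fact k) * Gamma (INR k + nu + 1))).

Definition marcumQ (mu x y : R) : R :=
  if Req_EM_T x 0 then upper_Gamma mu y / Gamma mu
  else Rpower x ((1 - mu) / 2) *
       RInt_gen (fun t => Rpower t ((mu - 1) / 2) * exp (- t - x)
                            * besselI (mu - 1) (2 * sqrt (x * t)))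
                (at_point y) (Rbar_locally p_infty).

Definition d2Q_dy2 (mu x y d2 : R) : Prop :=
  exists Q1 : R -> R,
    (forall t, 0 < t -> is_derive (fun s => marcumQ mu x s) t (Q1 t)) /\
    is_derive Q1 y d2.

From Stdlib Require Import Reals Lra Psatz Factorial Classical_Pred_Type.
From Coquelicot Require Import Coquelicot.
Open Scope R_scope.

(* Write [nu = mu - 1] and [S(u) = sum_k u^k / (k! Gamma(k + nu + 1))], an entire
   series with [I_nu(2 sqrt u) = u^(nu/2) S(u)].  Then
   [Q_mu(x, y) = e^(-x) int_y^oo t^nu e^(-t) S(x t) dt], so that
   [d^2 Q / dy^2 = e^(-x-y) y^(nu-1) ((y - nu) S(x y) - x y S'(x y))].
   The sign of the bracket follows from Turan-type bounds at [u = x y]: with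
   [F = S(u)] and [G = S'(u)],
     [u G (u G + nu F) <= u F^2 <= (u G + c F) (u G + nu F)]
   for [c = 1], and for [c = 1/2] when [nu >= 1/2].  Each bound reads [P(u) >= 0]
   with [P(0) >= 0], and the differential equation [u S'' + (nu + 1) S' = S]
   makes [u^a P(u)] nondecreasing for a suitable [a >= 0]. *)

Lemma Rpower_pos (t a : R) : 0 < Rpower t a.
Proof. apply exp_pos. Qed.

Lemma Rpower_le_1 (t a : R) : 0 < t <= 1 -> 0 <= a -> Rpower t a <= 1.
Proof.
  intros Ht Ha.
  assert (E : Rpower 1 a = 1) by (unfold Rpower; rewrite ln_1, Rmult_0_r; apply exp_0).
  rewrite <- E. apply Rle_Rpower_l; lra.
Qed.

Lemma Rpower_pred (t a : R) : 0 < t -> Rpower t a = t * Rpower t (a - 1).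
Proof.
  intros Ht. rewrite <- (Rpower_1 t) at 2 by exact Ht.
  rewrite <- Rpower_plus. f_equal. ring.
Qed.

Lemma exp_le (a b : R) : a <= b -> exp a <= exp b.
Proof. intros [Hab | ->]; [left; apply exp_increasing |]; lra. Qed.

Lemma ln_le_id (t : R) : 0 < t -> ln t <= t.
Proof.
  intros Ht. destruct (Rle_or_lt (ln t) (t - 1)) as [H | H]; [lra |].
  apply exp_increasing in H. rewrite exp_ln in H by exact Ht.
  generalize (exp_ineq1_le (t - 1)). lra.
Qed.

(* From [ln (k t / a) <= k t / a]. *)
Lemma Rpower_le_exp (a k : R) : 0 <= a -> 0 < k ->
  exists C, 0 < C /\ forall t, 0 < t -> Rpower t a <= C * exp (k * t).
Proof.
  intros Ha Hk. destruct (Req_dec a 0) as [-> | Ha0].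
  - exists 1. split; [lra |]. intros t Ht. rewrite Rpower_O by exact Ht.
    generalize (exp_ineq1_le (k * t)). nra.
  - exists (exp (a * (ln a - ln k))). split; [apply exp_pos |]. intros t Ht.
    unfold Rpower. rewrite <- exp_plus. apply exp_le.
    assert (H : ln (k * t / a) <= k * t / a) by (apply ln_le_id, Rdiv_lt_0_compat; nra).
    unfold Rdiv in H. rewrite !ln_mult, ln_Rinv in H by (try apply Rinv_0_lt_compat; nra).
    assert (a * (ln k + ln t + - ln a) <= a * (k * t * / a)) by (apply Rmult_le_compat_l; lra).
    replace (a * (k * t * / a)) with (k * t) in H0 by (field; lra). nra.
Qed.

Lemma is_derive_Rpower (a t : R) : 0 < t ->
  is_derive (fun u => Rpower u a) t (a * Rpower t (a - 1)).
Proof. intros Ht. apply is_derive_Reals, derivable_pt_lim_power, Ht. Qed.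

Lemma continuous_Rpower (a t : R) : 0 < t -> continuous (fun u => Rpower u a) t.
Proof. intros Ht. apply (ex_derive_continuous (K := R_AbsRing) (V := R_NormedModule)). eexists. apply is_derive_Rpower, Ht. Qed.

Lemma is_derive_exp_opp (t : R) : is_derive (fun u => exp (- u)) t (- exp (- t)).
Proof. auto_derive; [easy | ring]. Qed.

Lemma is_derive_mult_R (f g : R -> R) (t df dg : R) :
  is_derive f t df -> is_derive g t dg ->
  is_derive (fun u => f u * g u) t (df * g t + f t * dg).
Proof. intros Hf Hg. apply (is_derive_mult (K := R_AbsRing) f g); auto. intros; apply Rmult_comm. Qed.

Lemma is_derive_eq (f : R -> R) (t l l' : R) : is_derive f t l -> l = l' -> is_derive f t l'.
Proof. now intros H <-. Qed.

Lemma nondecreasing_of_derive_ge0 (W dW : R -> R) (a b : R) : a <= b ->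
  (forall t, a <= t <= b -> is_derive W t (dW t)) ->
  (forall t, a <= t <= b -> 0 <= dW t) -> W a <= W b.
Proof.
  intros Hab HW Hpos.
  destruct (MVT_gen W a b dW) as [c [Hc E]];
    rewrite ?Rmin_left, ?Rmax_right in * by lra.
  - intros t Ht. apply HW. lra.
  - intros t Ht. apply continuity_pt_filterlim, (ex_derive_continuous (K := R_AbsRing) (V := R_NormedModule)).
    eexists. apply HW. lra.
  - assert (0 <= dW c * (b - a)) by (apply Rmult_le_pos; [apply Hpos |]; lra). lra.
Qed.

Lemma nondecreasing_bounded_lim (F : R -> R) (a K : R) :
  (forall b1 b2, a <= b1 -> b1 <= b2 -> F b1 <= F b2) ->
  (forall b, a <= b -> F b <= K) ->
  exists l, filterlim F (Rbar_locally p_infty) (locally l) /\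
            forall b, a <= b -> F b <= l.
Proof.
  intros Hmono HK.
  set (E r := exists b, a <= b /\ r = F b).
  assert (HE : bound E) by (exists K; intros r [b [Hb ->]]; auto).
  assert (HE0 : exists r, E r) by (exists (F a), a; split; [lra | easy]).
  destruct (completeness E HE HE0) as [l [Hub Hlub]].
  assert (Hle : forall b, a <= b -> F b <= l) by (intros b Hb; apply Hub; now exists b).
  exists l. split; [| exact Hle].
  apply filterlim_locally. intros eps.
  assert (exists b0, a <= b0 /\ l - eps < F b0) as [b0 [Hb0 Hlt]].
  { apply not_all_not_ex. intros Hn.
    enough (l <= l - eps) by (destruct eps; simpl in *; lra).
    apply Hlub. intros r [b [Hb ->]]. apply Rnot_lt_le. intros Hc. now apply (Hn b). }
  exists b0. intros b Hb.
  assert (F b0 <= F b) by (apply Hmono; lra).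
  assert (F b <= l) by (apply Hle; lra).
  change (Rabs (F b - l) < eps). apply Rabs_def1; lra.
Qed.

Lemma is_RInt_gen_of_lim (f : R -> R) (a l : R) :
  (forall b, a <= b -> ex_RInt f a b) ->
  filterlim (fun b => RInt f a b) (Rbar_locally p_infty) (locally l) ->
  is_RInt_gen f (at_point a) (Rbar_locally p_infty) l.
Proof.
  intros Hex Hlim. apply filterlimi_locally. intros eps.
  destruct (proj1 (filterlim_locally _ _) Hlim eps) as [M HM].
  exists (fun t => t = a) (fun t => Rmax M a < t); [easy | now exists (Rmax M a) |].
  intros ? b -> Hb. exists (RInt f a b). split.
  - apply (RInt_correct (V := R_CompleteNormedModule)), Hex.
    generalize (Rmax_r M a). lra.
  - apply HM. generalize (Rmax_l M a). lra.
Qed.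

Lemma is_RInt_gen_exp_dominated (f : R -> R) (a C k : R) : 0 < k -> 0 <= C ->
  (forall b, a <= b -> ex_RInt f a b) ->
  (forall t, a < t -> 0 <= f t <= C * exp (- k * t)) ->
  exists l, filterlim (fun b => RInt f a b) (Rbar_locally p_infty) (locally l) /\
    is_RInt_gen f (at_point a) (Rbar_locally p_infty) l /\
    (forall b, a <= b -> RInt f a b <= l).
Proof.
  intros Hk HC Hex Hf.
  assert (Hmaj : forall b, is_RInt (fun t => C * exp (- k * t)) a b
                   (- C / k * exp (- k * b) - (- C / k * exp (- k * a)))).
  { intros b. apply (is_RInt_derive (fun t => - C / k * exp (- k * t))).
    - intros t _. auto_derive; [easy | field; lra].
    - intros t _. apply (ex_derive_continuous (fun t => C * exp (- k * t))).
      auto_derive. easy. }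
  assert (Hpart : forall b1 b2, a <= b1 -> b1 <= b2 ->
                    RInt f a b2 = RInt f a b1 + RInt f b1 b2 /\ ex_RInt f b1 b2).
  { intros b1 b2 H1 H2.
    assert (ex_RInt f b1 b2)
      by (apply (ex_RInt_Chasles_2 (V := R_CompleteNormedModule) f a); [lra | apply Hex; lra]).
    split; [| easy]. symmetry. apply (RInt_Chasles (V := R_CompleteNormedModule)); auto. }
  destruct (nondecreasing_bounded_lim (fun b => RInt f a b) a (C / k * exp (- k * a)))
    as [l [Hl Hle]].
  - intros b1 b2 H1 H2. destruct (Hpart b1 b2 H1 H2) as [-> Hex12].
    assert (0 <= RInt f b1 b2) by (apply RInt_ge_0; auto; intros t Ht; apply Hf; lra).
    lra.
  - intros b Hb. apply Rle_trans with (RInt (fun t => C * exp (- k * t)) a b).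
    + apply RInt_le; auto; [eexists; apply Hmaj |]. intros t Ht. apply Hf. lra.
    + rewrite (is_RInt_unique _ _ _ _ (Hmaj b)).
      assert (0 <= C / k * exp (- k * b))
        by (apply Rmult_le_pos; [apply Rdiv_le_0_compat | left; apply exp_pos]; lra).
      unfold Rdiv in *. lra.
  - exists l. repeat split; auto. apply is_RInt_gen_of_lim; auto.
Qed.

Lemma is_lim_exp_dominated (g : R -> R) (C k : R) : 0 < k -> 0 < C ->
  (forall b, 0 < b -> 0 <= g b <= C * exp (- k * b)) ->
  is_lim g p_infty 0.
Proof.
  intros Hk HC Hg. apply filterlim_locally. intros eps.
  set (M := - ln (eps / C) / k).
  exists (Rmax 0 M). intros b Hb.
  generalize (Rmax_l 0 M) (Rmax_r 0 M). intros HM0 HM.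
  destruct (Hg b ltac:(lra)) as [Hg0 Hgb].
  change (Rabs (g b - 0) < eps). rewrite Rminus_0_r, Rabs_pos_eq by lra.
  assert (Heps : 0 < eps / C) by (apply Rdiv_lt_0_compat; [apply cond_pos | lra]).
  assert (exp (- k * b) < eps / C).
  { rewrite <- (exp_ln (eps / C)) by lra. apply exp_increasing.
    assert (k * M < k * b) by (apply Rmult_lt_compat_l; lra).
    unfold M in H. replace (k * (- ln (eps / C) / k)) with (- ln (eps / C)) in H by (field; lra).
    lra. }
  assert (C * exp (- k * b) < C * (eps / C)) by (apply Rmult_lt_compat_l; lra).
  replace (C * (eps / C)) with (pos eps) in H0 by (field; lra). lra.
Qed.

(* [Rpower 0 a] is the junk value [1]; this is [t ^ a] extended by [0] to [t <= 0],
   continuous at [0] when [a > 0]. *)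
Definition Rpower0 (a t : R) : R := if Rlt_dec 0 t then Rpower t a else 0.

Lemma continuous_Rpower0 (a t : R) : 0 < a -> continuous (Rpower0 a) t.
Proof.
  intros Ha. destruct (Rlt_dec 0 t) as [Ht | Ht].
  - apply continuous_ext_loc with (fun u => Rpower u a); [| now apply continuous_Rpower].
    apply locally_interval with 0 p_infty; [easy | easy |].
    intros u Hu _. unfold Rpower0. now destruct (Rlt_dec 0 u).
  - destruct (Rlt_dec t 0) as [Ht' | Ht'].
    + apply continuous_ext_loc with (fun _ => 0); [| apply continuous_const].
      apply locally_interval with m_infty 0; [easy | easy |].
      intros u _ Hu. simpl in Hu. unfold Rpower0. destruct (Rlt_dec 0 u); [lra | easy].
    + replace t with 0 by lra. apply filterlim_locally. intros eps.
      exists (mkposreal _ (Rpower_pos eps (/ a))). intros u Hu.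
      change (Rabs (u - 0) < Rpower eps (/ a)) in Hu.
      change (Rabs (Rpower0 a u - Rpower0 a 0) < eps).
      unfold Rpower0. destruct (Rlt_dec 0 0); [lra |].
      rewrite Rminus_0_r in *. destruct (Rlt_dec 0 u) as [Hu0 | Hu0].
      * rewrite Rabs_pos_eq by (left; apply Rpower_pos).
        rewrite Rabs_pos_eq in Hu by lra.
        apply Rlt_le_trans with (Rpower (Rpower eps (/ a)) a); [now apply Rlt_Rpower_l |].
        rewrite Rpower_mult, Rinv_l, Rpower_1 by (try apply cond_pos; lra). lra.
      * rewrite Rabs_R0. apply cond_pos.
Qed.

Definition gamma_kernel (a t : R) : R := Rpower t a * exp (- t).

Lemma gamma_kernel_ge0 (a t : R) : 0 <= gamma_kernel a t.
Proof. apply Rmult_le_pos; left; [apply Rpower_pos | apply exp_pos]. Qed.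

Lemma continuous_gamma_kernel (a t : R) : 0 < t -> continuous (gamma_kernel a) t.
Proof.
  intros Ht. apply (continuous_mult (K := R_AbsRing)); [now apply continuous_Rpower |].
  apply (ex_derive_continuous (fun u => exp (- u))). auto_derive. easy.
Qed.

Lemma ex_RInt_gamma_kernel (a b : R) : 0 <= a -> 0 <= b -> ex_RInt (gamma_kernel a) 0 b.
Proof.
  intros Ha Hb.
  assert (Hexp : forall z, continuous (fun t => exp (- t)) z)
    by (intros z; apply (ex_derive_continuous (fun t => exp (- t))); auto_derive; easy).
  destruct (Req_dec a 0) as [-> | Ha0].
  - apply (ex_RInt_ext (fun t => exp (- t))).
    + intros t Ht. rewrite Rmin_left in Ht by lra.
      unfold gamma_kernel. rewrite Rpower_O by lra. now rewrite Rmult_1_l.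
    + apply (ex_RInt_continuous (V := R_CompleteNormedModule)). auto.
  - apply (ex_RInt_ext (fun t => Rpower0 a t * exp (- t))).
    + intros t Ht. rewrite Rmin_left in Ht by lra.
      unfold gamma_kernel, Rpower0. destruct (Rlt_dec 0 t); [easy | lra].
    + apply (ex_RInt_continuous (V := R_CompleteNormedModule)). intros z _.
      apply (continuous_mult (K := R_AbsRing)); [apply continuous_Rpower0; lra | auto].
Qed.

Lemma ex_RInt_gamma_kernel_pos (a e b : R) : 0 < e -> 0 < b -> ex_RInt (gamma_kernel a) e b.
Proof.
  intros He Hb. apply (ex_RInt_continuous (V := R_CompleteNormedModule)). intros z Hz.
  apply continuous_gamma_kernel. generalize (Rmin_pos e b He Hb). lra.
Qed.

Lemma gamma_kernel_bound (a : R) : 0 <= a ->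
  exists C, 0 < C /\ forall t, 0 < t -> 0 <= gamma_kernel a t <= C * exp (- (1/2) * t).
Proof.
  intros Ha. destruct (Rpower_le_exp a (1/2) Ha) as [C [HC HB]]; [lra |].
  exists C. split; [easy |]. intros t Ht. split; [apply gamma_kernel_ge0 |].
  replace (C * exp (- (1/2) * t)) with (C * exp (1/2 * t) * exp (- t))
    by (rewrite Rmult_assoc, <- exp_plus; do 2 f_equal; lra).
  apply Rmult_le_compat_r; [left; apply exp_pos | now apply HB].
Qed.

Lemma Gamma_spec (s : R) : 1 <= s ->
  filterlim (fun b => RInt (gamma_kernel (s - 1)) 0 b) (Rbar_locally p_infty)
    (locally (Gamma s)) /\
  forall b, 0 <= b -> RInt (gamma_kernel (s - 1)) 0 b <= Gamma s.
Proof.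
  intros Hs. destruct (gamma_kernel_bound (s - 1)) as [C [HC HB]]; [lra |].
  destruct (is_RInt_gen_exp_dominated (gamma_kernel (s - 1)) 0 C (1/2))
    as [l [Hlim [Hint Hle]]]; try lra.
  - intros b Hb. apply ex_RInt_gamma_kernel; lra.
  - exact HB.
  - replace (Gamma s) with l by (symmetry; now apply is_RInt_gen_unique). easy.
Qed.

Lemma eq_0_of_le_small (D K d : R) : 0 < d ->
  (forall e, 0 < e < d -> Rabs D <= K * e) -> D = 0.
Proof.
  intros Hd H. destruct (Req_dec D 0) as [| HD]; [easy | exfalso].
  apply Rabs_pos_lt in HD. destruct (Rle_or_lt K 0) as [HK | HK].
  - specialize (H (d / 2) ltac:(lra)). nra.
  - set (e := Rmin (d / 2) (Rabs D / (2 * K))).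
    assert (He : 0 < e) by (apply Rmin_pos; apply Rdiv_lt_0_compat; lra).
    generalize (Rmin_l (d / 2) (Rabs D / (2 * K))) (Rmin_r (d / 2) (Rabs D / (2 * K))).
    fold e. intros He1 He2. specialize (H e ltac:(lra)).
    assert (K * e <= K * (Rabs D / (2 * K))) by (apply Rmult_le_compat_l; lra).
    replace (K * (Rabs D / (2 * K))) with (Rabs D / 2) in H0 by (field; lra). lra.
Qed.

Lemma RInt_gamma_kernel_small (a e : R) : 0 <= a -> 0 < e <= 1 ->
  0 <= RInt (gamma_kernel a) 0 e <= e.
Proof.
  intros Ha He. split.
  - apply RInt_ge_0; [lra | apply ex_RInt_gamma_kernel; lra |].
    intros; apply gamma_kernel_ge0.
  - apply Rle_trans with (RInt (fun _ => 1) 0 e).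
    + apply RInt_le; [lra | apply ex_RInt_gamma_kernel; lra | apply ex_RInt_const |].
      intros t Ht. unfold gamma_kernel. rewrite <- (Rmult_1_l 1).
      apply Rmult_le_compat; try (left; apply exp_pos); try (left; apply Rpower_pos).
      * apply Rpower_le_1; lra.
      * rewrite <- exp_0. apply exp_le. lra.
    + rewrite RInt_const. change (scal (e - 0) 1) with ((e - 0) * 1). lra.
Qed.

Lemma RInt_gamma_kernel_by_parts (s e b : R) : 0 < e <= b ->
  RInt (gamma_kernel s) e b - s * RInt (gamma_kernel (s - 1)) e b
  = gamma_kernel s e - gamma_kernel s b.
Proof.
  intros Heb.
  assert (HI : is_RInt (fun t => gamma_kernel s t - s * gamma_kernel (s - 1) t) e b
                 (- gamma_kernel s b - - gamma_kernel s e)).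
  { apply (is_RInt_derive (fun t => - gamma_kernel s t)); intros t Ht;
      rewrite Rmin_left, Rmax_right in Ht by lra.
    - unfold gamma_kernel. eapply is_derive_eq.
      + apply (is_derive_opp (K := R_AbsRing) (V := R_NormedModule)
                 (fun u => Rpower u s * exp (- u))).
        apply is_derive_mult_R; [apply is_derive_Rpower; lra | apply is_derive_exp_opp].
      + change (opp (s * Rpower t (s - 1) * exp (- t) + Rpower t s * - exp (- t))
                = Rpower t s * exp (- t) - s * (Rpower t (s - 1) * exp (- t))). unfold opp; simpl. ring.
    - apply (continuous_minus (K := R_AbsRing) (V := R_NormedModule));
        [| apply (continuous_scal_r (K := R_AbsRing) (V := R_NormedModule) s)];
        apply continuous_gamma_kernel; lra. }
  assert (H := is_RInt_minus _ _ _ _ _ _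
                 (RInt_correct _ _ _ (ex_RInt_gamma_kernel_pos s e b ltac:(lra) ltac:(lra)))
                 (is_RInt_scal _ _ _ s _
                    (RInt_correct _ _ _ (ex_RInt_gamma_kernel_pos (s - 1) e b ltac:(lra) ltac:(lra))))).
  assert (E : - gamma_kernel s b - - gamma_kernel s e
              = minus (RInt (gamma_kernel s) e b) (scal s (RInt (gamma_kernel (s - 1)) e b))).
  { rewrite <- (is_RInt_unique _ _ _ _ HI). exact (is_RInt_unique _ _ _ _ H). }
  unfold minus, plus, opp, scal in E; simpl in E. unfold mult in E; simpl in E. lra.
Qed.

(* Integrate by parts on [e, b]; the contributions of [0, e] are [O(e)]. *)
Lemma RInt_gamma_kernel_rec (s b : R) : 1 <= s -> 0 < b ->
  RInt (gamma_kernel s) 0 b = s * RInt (gamma_kernel (s - 1)) 0 b - gamma_kernel s b.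
Proof.
  intros Hs Hb.
  set (D := RInt (gamma_kernel s) 0 b - s * RInt (gamma_kernel (s - 1)) 0 b
            + gamma_kernel s b).
  enough (D = 0) by (unfold D in *; lra).
  apply (eq_0_of_le_small D (s + 2) (Rmin 1 b)); [now apply Rmin_pos; lra |].
  intros e He. generalize (Rmin_l 1 b) (Rmin_r 1 b). intros He1 He2.
  assert (Hsplit : forall a, 0 <= a ->
            RInt (gamma_kernel a) 0 b = RInt (gamma_kernel a) 0 e + RInt (gamma_kernel a) e b).
  { intros a Ha. symmetry. apply (RInt_Chasles (V := R_CompleteNormedModule));
      [apply ex_RInt_gamma_kernel | apply ex_RInt_gamma_kernel_pos]; lra. }
  assert (HD : D = RInt (gamma_kernel s) 0 e - s * RInt (gamma_kernel (s - 1)) 0 e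
                   + gamma_kernel s e).
  { unfold D. rewrite (Hsplit s), (Hsplit (s - 1)) by lra.
    generalize (RInt_gamma_kernel_by_parts s e b ltac:(lra)). lra. }
  destruct (RInt_gamma_kernel_small s e) as [H1 H2]; [lra | lra |].
  destruct (RInt_gamma_kernel_small (s - 1) e) as [H3 H4]; [lra | lra |].
  assert (H5 : gamma_kernel s e <= e).
  { unfold gamma_kernel. rewrite Rpower_pred by lra.
    assert (Rpower e (s - 1) <= 1) by (apply Rpower_le_1; lra).
    assert (exp (- e) <= 1) by (rewrite <- exp_0; apply exp_le; lra).
    assert (Rpower e (s - 1) * exp (- e) <= 1 * 1)
      by (apply Rmult_le_compat; auto; left; auto using Rpower_pos, exp_pos).
    rewrite Rmult_assoc. nra. }
  generalize (gamma_kernel_ge0 s e). rewrite HD. intros. apply Rabs_le. nra.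
Qed.

Lemma Gamma_S (s : R) : 1 <= s -> Gamma (s + 1) = s * Gamma s.
Proof.
  intros Hs.
  destruct (Gamma_spec (s + 1)) as [H1 _]; [lra |].
  destruct (Gamma_spec s) as [H0 _]; [lra |].
  replace (s + 1 - 1) with s in H1 by ring.
  destruct (gamma_kernel_bound s) as [C [HC HB]]; [lra |].
  assert (Hk : is_lim (gamma_kernel s) p_infty 0)
    by (apply (is_lim_exp_dominated _ C (1/2)); auto; lra).
  assert (HL : is_lim (fun b => s * RInt (gamma_kernel (s - 1)) 0 b - gamma_kernel s b)
                 p_infty (s * Gamma s - 0))
    by (apply is_lim_minus'; [apply (is_lim_scal_l _ s p_infty (Gamma s)), H0 | exact Hk]).
  apply (is_lim_ext_loc _ (fun b => RInt (gamma_kernel s) 0 b)) in HL.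
  - rewrite (filterlim_locally_unique _ _ _ H1 HL). ring.
  - exists 0. intros b Hb. symmetry. apply RInt_gamma_kernel_rec; lra.
Qed.

Lemma Gamma_pos (s : R) : 1 <= s -> 0 < Gamma s.
Proof.
  intros Hs. destruct (Gamma_spec s Hs) as [_ Hle].
  apply Rlt_le_trans with (RInt (gamma_kernel (s - 1)) 0 2); [| apply Hle; lra].
  assert (Hex12 : ex_RInt (gamma_kernel (s - 1)) 1 2) by (apply ex_RInt_gamma_kernel_pos; lra).
  rewrite <- (RInt_Chasles (V := R_CompleteNormedModule) _ 0 1 2)
    by (first [exact Hex12 | apply ex_RInt_gamma_kernel; lra]).
  assert (0 <= RInt (gamma_kernel (s - 1)) 0 1) by (apply RInt_gamma_kernel_small; lra).
  assert (exp (-2) <= RInt (gamma_kernel (s - 1)) 1 2).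
  { apply Rle_trans with (RInt (fun _ => exp (-2)) 1 2).
    - rewrite RInt_const. change (scal (2 - 1) (exp (-2))) with ((2 - 1) * exp (-2)). lra.
    - apply RInt_le; [lra | apply ex_RInt_const | easy |]. intros t Ht.
      unfold gamma_kernel. rewrite <- (Rmult_1_l (exp (-2))).
      apply Rmult_le_compat; [lra | left; apply exp_pos | | apply exp_le; lra].
      apply Rle_trans with (Rpower t 0); [rewrite Rpower_O; lra | apply Rle_Rpower; lra]. }
  generalize (exp_pos (-2)). change (plus ?a ?b) with (a + b). lra.
Qed.

Lemma CV_radius_infinite_of_ratio (a : nat -> R) : (forall n, 0 < a n) ->
  (forall n, a (S n) <= a n / (INR n + 1)) -> CV_radius a = p_infty.
Proof.
  intros Hpos Hratio. apply CV_radius_infinite_DAlembert; [intros n; generalize (Hpos n); lra |].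
  assert (Hinv : is_lim_seq (fun n => / (INR n + 1)) 0).
  { apply (is_lim_seq_inv _ p_infty); [| discriminate].
    apply is_lim_seq_le_p_loc with INR; [| apply is_lim_seq_INR].
    exists O. intros n _. lra. }
  apply is_lim_seq_le_le with (fun _ => 0) (fun n => / (INR n + 1));
    [| apply is_lim_seq_const | exact Hinv].
  intros n. generalize (Hpos n) (Hpos (S n)) (Hratio n) (pos_INR n). intros Hn HSn Hr HN.
  assert (0 <= a (S n) / a n) by (apply Rdiv_le_0_compat; lra).
  rewrite Rabs_pos_eq by easy. split; [easy |].
  apply (Rmult_le_reg_r (a n)); [easy |]. unfold Rdiv in *.
  rewrite Rmult_assoc, Rinv_l, Rmult_1_r by lra. lra.
Qed.

Lemma PSeries_ge0 (b : nat -> R) (u : R) : (forall n, 0 <= b n) -> 0 <= u ->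
  ex_pseries b u -> 0 <= PSeries b u.
Proof.
  intros Hb Hu Hex. rewrite <- (PSeries_const_0 u). apply Series_le.
  - intros n. rewrite Rmult_0_l. split; [lra |]. apply Rmult_le_pos; auto. now apply pow_le.
  - now apply ex_pseries_R.
Qed.

Definition bessel_coef (nu : R) (k : nat) : R := / (INR (fact k) * Gamma (INR k + nu + 1)).

Lemma INR_fact_pos (k : nat) : 0 < INR (fact k).
Proof. apply lt_0_INR, lt_O_fact. Qed.

Section BesselSeries.
Variable nu : R.
Hypothesis Hnu : 0 <= nu.

Lemma bessel_coef_pos (k : nat) : 0 < bessel_coef nu k.
Proof.
  apply Rinv_0_lt_compat, Rmult_lt_0_compat; [apply INR_fact_pos |].
  apply Gamma_pos. generalize (pos_INR k). lra.
Qed.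

Lemma bessel_coef_S (k : nat) :
  bessel_coef nu (S k) * ((INR k + 1) * (INR k + nu + 1)) = bessel_coef nu k.
Proof.
  unfold bessel_coef. rewrite S_INR.
  replace (INR k + 1 + nu + 1) with ((INR k + nu + 1) + 1) by ring.
  rewrite Gamma_S by (generalize (pos_INR k); lra).
  rewrite fact_simpl, mult_INR, S_INR.
  assert (0 < Gamma (INR k + nu + 1)) by (apply Gamma_pos; generalize (pos_INR k); lra).
  generalize (INR_fact_pos k) (pos_INR k). intros.
  field. repeat split; lra.
Qed.

Lemma bessel_coef_le (k : nat) : bessel_coef nu k <= bessel_coef nu 0 / INR (fact k) ^ 2.
Proof.
  induction k as [| k IHk].
  - simpl. replace (1 * (1 * 1)) with 1 by ring. rewrite Rdiv_1_r. lra.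
  - rewrite <- (bessel_coef_S k) in IHk. rewrite fact_simpl, mult_INR, S_INR.
    generalize (INR_fact_pos k) (bessel_coef_pos (S k)) (pos_INR k). intros Hf HS Hk.
    apply (Rmult_le_reg_r ((INR k + 1) ^ 2)); [nra |].
    replace (bessel_coef nu 0 / ((INR k + 1) * INR (fact k)) ^ 2 * (INR k + 1) ^ 2)
      with (bessel_coef nu 0 / INR (fact k) ^ 2) by (field; lra).
    apply Rle_trans with (2 := IHk). apply Rmult_le_compat_l; nra.
Qed.

Lemma CV_radius_bessel_coef : CV_radius (bessel_coef nu) = p_infty.
Proof.
  apply CV_radius_infinite_of_ratio; [exact bessel_coef_pos |]. intros n.
  rewrite <- (bessel_coef_S n).
  generalize (bessel_coef_pos (S n)) (pos_INR n). intros HS Hn.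
  replace (bessel_coef nu (S n) * ((INR n + 1) * (INR n + nu + 1)) / (INR n + 1))
    with (bessel_coef nu (S n) * (INR n + nu + 1)) by (field; lra).
  nra.
Qed.

Definition besselS (u : R) : R := PSeries (bessel_coef nu) u.
Definition besselS1 (u : R) : R := PSeries (PS_derive (bessel_coef nu)) u.
Definition besselS2 (u : R) : R := PSeries (PS_derive (PS_derive (bessel_coef nu))) u.

Lemma bessel_coef_inside (u : R) : Rbar_lt (Rabs u) (CV_radius (bessel_coef nu)).
Proof. now rewrite CV_radius_bessel_coef. Qed.

Lemma bessel_coef_inside1 (u : R) : Rbar_lt (Rabs u) (CV_radius (PS_derive (bessel_coef nu))).
Proof. rewrite CV_radius_derive. apply bessel_coef_inside. Qed.

Lemma bessel_coef_inside2 (u : R) :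
  Rbar_lt (Rabs u) (CV_radius (PS_derive (PS_derive (bessel_coef nu)))).
Proof. rewrite CV_radius_derive. apply bessel_coef_inside1. Qed.

Lemma is_derive_besselS (u : R) : is_derive besselS u (besselS1 u).
Proof. apply is_derive_PSeries, bessel_coef_inside. Qed.

Lemma is_derive_besselS1 (u : R) : is_derive besselS1 u (besselS2 u).
Proof. apply is_derive_PSeries, bessel_coef_inside1. Qed.

Lemma ex_derive_besselS (u : R) : ex_derive besselS u.
Proof. eexists. apply is_derive_besselS. Qed.

Lemma ex_derive_besselS1 (u : R) : ex_derive besselS1 u.
Proof. eexists. apply is_derive_besselS1. Qed.

Lemma besselS_ode (u : R) : u * besselS2 u + (nu + 1) * besselS1 u = besselS u.
Proof.
  unfold besselS, besselS1, besselS2.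
  rewrite <- PSeries_incr_1, <- PSeries_scal, <- PSeries_plus.
  - apply PSeries_ext. intros [| m]; unfold PS_plus, PS_scal, PS_incr_1, PS_derive;
      [rewrite <- (bessel_coef_S 0) | rewrite <- (bessel_coef_S (S m))];
      rewrite ?S_INR; simpl; unfold zero, plus, scal, mult; simpl; unfold mult; simpl; ring.
  - apply ex_pseries_incr_1, CV_radius_inside, bessel_coef_inside2.
  - apply ex_pseries_scal; [apply Rmult_comm |]. apply CV_radius_inside, bessel_coef_inside1.
Qed.

Lemma besselS_ge_coef0 (u : R) : 0 <= u -> bessel_coef nu 0 <= besselS u.
Proof.
  intros Hu. unfold besselS.
  rewrite PSeries_decr_1 by apply CV_radius_inside, bessel_coef_inside.
  assert (0 <= PSeries (PS_decr_1 (bessel_coef nu)) u).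
  { apply PSeries_ge0; auto.
    - intros n. left. apply bessel_coef_pos.
    - apply CV_radius_inside. rewrite CV_radius_decr_1. apply bessel_coef_inside. }
  generalize (Rmult_le_pos _ _ Hu H). lra.
Qed.

Lemma besselS_pos (u : R) : 0 <= u -> 0 < besselS u.
Proof.
  intros Hu. apply Rlt_le_trans with (bessel_coef nu 0);
    [apply bessel_coef_pos | now apply besselS_ge_coef0].
Qed.

Lemma besselS1_ge0 (u : R) : 0 <= u -> 0 <= besselS1 u.
Proof.
  intros Hu. apply PSeries_ge0; auto.
  - intros n. apply Rmult_le_pos; [apply pos_INR | left; apply bessel_coef_pos].
  - apply CV_radius_inside, bessel_coef_inside1.
Qed.

(* Termwise, [bessel_coef nu k * u ^ k <= c0 * ((u/l) ^ k / k!) * (l ^ k / k!)]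
   and [l ^ k / k!] is bounded. *)
Lemma besselS_exp_bound (l : R) : 0 < l ->
  exists M, 0 < M /\ forall u, 0 <= u -> besselS u <= M * exp (u / l).
Proof.
  intros Hl.
  assert (Hexp : forall z, ex_series (fun k => / INR (fact k) * z ^ k)).
  { intros z. apply ex_pseries_R, CV_radius_inside.
    rewrite (CV_radius_infinite_of_ratio (fun k => / INR (fact k))); [easy | |].
    - intros n. apply Rinv_0_lt_compat, INR_fact_pos.
    - intros n. rewrite fact_simpl, mult_INR, S_INR. generalize (INR_fact_pos n) (pos_INR n).
      intros. right. field. lra. }
  destruct (filterlim_bounded (V := R_NormedModule) (fun k => / INR (fact k) * l ^ k)) as [B HB].
  { exists 0. apply ex_series_lim_0, Hexp. }
  set (B1 := Rmax B 1).
  assert (HB1 : forall k, / INR (fact k) * l ^ k <= B1).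
  { intros k. apply Rle_trans with B; [| apply Rmax_l]. eapply Rle_trans; [apply Rle_abs | apply HB]. }
  assert (HB0 : 0 < B1) by (generalize (Rmax_r B 1); unfold B1; lra).
  generalize (bessel_coef_pos 0). intros Hc0.
  exists (bessel_coef nu 0 * B1). split; [now apply Rmult_lt_0_compat |].
  intros u Hu. rewrite exp_Reals. unfold PSeries. rewrite <- Series_scal_l.
  apply Series_le; [| apply (ex_series_scal_l (V := R_NormedModule)), Hexp].
  intros n. generalize (INR_fact_pos n) (pow_le _ n Hu) (HB1 n) (pow_lt _ n Hl).
  intros Hf Hun Hbn Hln.
  assert (Hq : 0 <= / INR (fact n) * (u / l) ^ n)
    by (apply Rmult_le_pos; [left; now apply Rinv_0_lt_compat | apply pow_le, Rdiv_le_0_compat; lra]).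
  split; [apply Rmult_le_pos; [left; apply bessel_coef_pos | easy] |].
  apply Rle_trans with (bessel_coef nu 0 / INR (fact n) ^ 2 * u ^ n);
    [apply Rmult_le_compat_r; [easy | apply bessel_coef_le] |].
  replace (bessel_coef nu 0 / INR (fact n) ^ 2 * u ^ n) with
    (bessel_coef nu 0 * ((/ INR (fact n) * (u / l) ^ n) * (/ INR (fact n) * l ^ n)))
    by (unfold Rdiv; rewrite Rpow_mult_distr, pow_inv; field; lra).
  replace (bessel_coef nu 0 * B1 * (/ INR (fact n) * (u / l) ^ n))
    with (bessel_coef nu 0 * ((/ INR (fact n) * (u / l) ^ n) * B1)) by ring.
  apply Rmult_le_compat_l; [lra |]. now apply Rmult_le_compat_l.
Qed.

End BesselSeries.

(* [u ^ a * P u] is nondecreasing on [(0, +oo)], and tends to a nonnegative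
   limit at [0] by continuity of [P]. *)
Lemma nonneg_of_weighted_derive (a : R) (P dP : R -> R) : 0 <= a ->
  continuous P 0 -> 0 <= P 0 ->
  (forall u, 0 < u -> is_derive P u (dP u)) ->
  (forall u, 0 < u -> 0 <= a * P u + u * dP u) ->
  forall u, 0 <= u -> 0 <= P u.
Proof.
  intros Ha HP0 HP0pos HdP Hw u Hu.
  destruct (Req_dec u 0) as [-> | Hu0]; [easy |].
  set (W v := Rpower v a * P v).
  assert (HW : forall v, 0 < v -> v <= u -> W v <= W u).
  { intros v Hv Hvu. apply (nondecreasing_of_derive_ge0 W
      (fun t => Rpower t (a - 1) * (a * P t + t * dP t))); [easy | |].
    - intros t Ht. eapply is_derive_eq.
      + apply is_derive_mult_R; [apply is_derive_Rpower | apply HdP]; lra.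
      + cbv beta. rewrite (Rpower_pred t a) by lra. ring.
    - intros t Ht. apply Rmult_le_pos; [left; apply Rpower_pos | apply Hw; lra]. }
  apply Rnot_lt_le. intros HPu.
  assert (HWu : W u < 0) by (apply Rmult_pos_neg; [apply Rpower_pos | easy]).
  destruct (proj1 (filterlim_locally P (P 0)) HP0 (mkposreal (- W u) ltac:(lra))) as [d Hd].
  set (v := Rmin (d / 2) (Rmin (u / 2) (1 / 2))).
  assert (Hv : 0 < v) by (apply Rmin_pos; [generalize (cond_pos d) | apply Rmin_pos]; lra).
  generalize (Rmin_l (d / 2) (Rmin (u / 2) (1 / 2))) (Rmin_r (d / 2) (Rmin (u / 2) (1 / 2)))
    (Rmin_l (u / 2) (1 / 2)) (Rmin_r (u / 2) (1 / 2)). fold v. intros Hv1 Hv2 Hv3 Hv4.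
  assert (HPv : W u < P v).
  { assert (Hball : ball 0 d v)
      by (change (Rabs (v - 0) < d); rewrite Rminus_0_r, Rabs_pos_eq; lra).
    specialize (Hd v Hball). change (Rabs (P v - P 0) < - W u) in Hd.
    apply Rabs_def2 in Hd. lra. }
  assert (W u < W v).
  { generalize (Rpower_pos v a) (Rpower_le_1 v a ltac:(lra) Ha). intros. unfold W at 2.
    destruct (Rle_or_lt 0 (P v)); nra. }
  generalize (HW v Hv ltac:(lra)). lra.
Qed.

Section Turan.
Variable nu : R.
Hypothesis Hnu : 0 <= nu.

Definition turan (c u : R) : R :=
  (u * besselS1 nu u + c * besselS nu u) * (u * besselS1 nu u + nu * besselS nu u)
  - u * besselS nu u ^ 2.

Definition turan_derive (c u : R) : R :=
  (nu + c - 1) * besselS nu u ^ 2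
  - (nu - c) * besselS1 nu u * (u * besselS1 nu u + nu * besselS nu u).

Lemma continuous_turan (c u : R) : continuous (turan c) u.
Proof.
  apply (ex_derive_continuous (K := R_AbsRing) (V := R_NormedModule)). unfold turan.
  auto_derive. repeat split; auto using ex_derive_besselS, ex_derive_besselS1, Hnu.
Qed.

(* The derivative is simplified with the differential equation of [besselS]. *)
Lemma is_derive_turan (c u : R) : 0 < u -> is_derive (turan c) u (turan_derive c u).
Proof.
  intros Hu. unfold turan. auto_derive.
  - repeat split; auto using ex_derive_besselS, ex_derive_besselS1, Hnu.
  - pose proof (is_derive_unique _ _ _ (is_derive_besselS nu Hnu u)) as E1.
    pose proof (is_derive_unique _ _ _ (is_derive_besselS1 nu Hnu u)) as E2.
    change (besselS nu) with (fun t => besselS nu t) in E1.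
    change (besselS1 nu) with (fun t => besselS1 nu t) in E2.
    rewrite !E1, !E2.
    replace (besselS2 nu u) with ((besselS nu u - (nu + 1) * besselS1 nu u) / u)
      by (rewrite <- (besselS_ode nu Hnu u); field; lra).
    unfold turan_derive. field. lra.
Qed.

Lemma turan_ge0 (c u : R) : 1/2 <= c -> 1 - c <= nu -> 0 <= u -> 0 <= turan c u.
Proof.
  intros Hc Hcnu. apply (nonneg_of_weighted_derive (nu + c - 1) _ (turan_derive c));
    [lra | apply continuous_turan | | now apply is_derive_turan |].
  - unfold turan. replace (_ - _) with (c * nu * besselS nu 0 ^ 2) by ring.
    apply Rmult_le_pos; [apply Rmult_le_pos | apply pow2_ge_0]; lra.
  - intros t Ht.
    assert (HF : 0 < besselS nu t) by (apply besselS_pos; lra).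
    assert (HG : 0 <= besselS1 nu t) by (apply besselS1_ge0; lra).
    unfold turan, turan_derive. set (F := besselS nu t) in *. set (G := besselS1 nu t) in *.
    replace (_ + _) with ((t * G + nu * F) * ((2 * c - 1) * (t * G) + c * (nu + c - 1) * F))
      by ring.
    assert (0 <= t * G) by (apply Rmult_le_pos; lra).
    apply Rmult_le_pos; [nra |].
    apply Rplus_le_le_0_compat; apply Rmult_le_pos; try nra.
Qed.

Lemma turan0_le0 (u : R) : 0 <= u -> turan 0 u <= 0.
Proof.
  intros Hu. enough (0 <= - turan 0 u) by lra. revert u Hu.
  apply (nonneg_of_weighted_derive nu _ (fun u => - turan_derive 0 u)); [easy | | | |].
  - apply (continuous_opp (K := R_AbsRing) (V := R_NormedModule)), continuous_turan.
  - unfold turan. right. ring.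
  - intros t Ht. apply (is_derive_opp (K := R_AbsRing) (V := R_NormedModule)).
    now apply is_derive_turan.
  - intros t Ht. unfold turan, turan_derive.
    replace (_ + _) with (t * besselS nu t ^ 2) by ring.
    apply Rmult_le_pos; [lra | apply pow2_ge_0].
Qed.

End Turan.

Section MarcumIntegrand.
Variables nu x : R.
Hypothesis Hnu : 0 <= nu.
Hypothesis Hx : 0 <= x.

Definition marcum_integrand (t : R) : R := Rpower t nu * exp (- t) * besselS nu (x * t).

Lemma is_derive_marcum_integrand (t : R) : 0 < t ->
  is_derive marcum_integrand t
    (Rpower t (nu - 1) * exp (- t)
     * ((nu - t) * besselS nu (x * t) + x * t * besselS1 nu (x * t))).
Proof.
  intros Ht. unfold marcum_integrand. eapply is_derive_eq.
  - apply is_derive_mult_R; [apply is_derive_mult_R |].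
    + now apply is_derive_Rpower.
    + apply is_derive_exp_opp.
    + apply (is_derive_comp (besselS nu) (fun s => x * s) t (besselS1 nu (x * t)) x);
        [now apply is_derive_besselS | auto_derive; [easy | ring]].
  - cbv beta. change (scal x ?b) with (x * b). rewrite (Rpower_pred t nu) by exact Ht. ring.
Qed.

Lemma continuous_marcum_integrand (t : R) : 0 < t -> continuous marcum_integrand t.
Proof.
  intros Ht. apply (ex_derive_continuous (K := R_AbsRing) (V := R_NormedModule)).
  eexists. now apply is_derive_marcum_integrand.
Qed.

Lemma ex_RInt_marcum_integrand (a b : R) : 0 < a -> 0 < b -> ex_RInt marcum_integrand a b.
Proof.
  intros Ha Hb. apply (ex_RInt_continuous (V := R_CompleteNormedModule)). intros z Hz.
  apply continuous_marcum_integrand. generalize (Rmin_pos a b Ha Hb). lra.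
Qed.

(* [t ^ nu <= C1 e^(t/4)] and [besselS nu (x t) <= M e^(t/4)]. *)
Lemma marcum_integrand_bound : exists C, 0 < C /\
  forall t, 0 < t -> 0 <= marcum_integrand t <= C * exp (- (1/2) * t).
Proof.
  destruct (Rpower_le_exp nu (1/4) Hnu) as [C1 [HC1 HB1]]; [lra |].
  destruct (besselS_exp_bound nu Hnu (4 * x + 1)) as [M [HM HBM]]; [lra |].
  exists (C1 * M). split; [now apply Rmult_lt_0_compat |]. intros t Ht.
  assert (Hxt : 0 <= x * t) by (apply Rmult_le_pos; lra).
  generalize (besselS_pos nu Hnu (x * t) Hxt) (HB1 t Ht) (HBM (x * t) Hxt)
    (Rpower_pos t nu) (exp_pos (- t)). intros HS H1 H2 Hp He.
  assert (H3 : exp (x * t / (4 * x + 1)) <= exp (1/4 * t)).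
  { apply exp_le, (Rmult_le_reg_r (4 * x + 1)); [lra |].
    unfold Rdiv. rewrite Rmult_assoc, Rinv_l by lra. nra. }
  unfold marcum_integrand. split; [apply Rmult_le_pos; [apply Rmult_le_pos |]; lra |].
  apply Rle_trans with (C1 * exp (1/4 * t) * exp (- t) * (M * exp (1/4 * t))).
  - apply Rmult_le_compat; [nra | lra | apply Rmult_le_compat_r; lra |].
    apply Rle_trans with (1 := H2). apply Rmult_le_compat_l; lra.
  - replace (- (1/2) * t) with (1/4 * t + - t + 1/4 * t) by field.
    rewrite !exp_plus. apply Req_le. ring.
Qed.

Definition marcum_tail (s : R) : R :=
  RInt_gen marcum_integrand (at_point s) (Rbar_locally p_infty).

Lemma is_RInt_gen_marcum_tail (s : R) : 0 < s ->
  is_RInt_gen marcum_integrand (at_point s) (Rbar_locally p_infty) (marcum_tail s).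
Proof.
  intros Hs. destruct marcum_integrand_bound as [C [HC HB]].
  destruct (is_RInt_gen_exp_dominated marcum_integrand s C (1/2)) as [l [_ [Hl _]]]; try lra.
  - intros b Hb. apply ex_RInt_marcum_integrand; lra.
  - intros t Ht. apply HB. lra.
  - unfold marcum_tail. now rewrite (is_RInt_gen_unique _ _ Hl).
Qed.

Lemma is_derive_marcum_tail (t : R) : 0 < t -> is_derive marcum_tail t (- marcum_integrand t).
Proof.
  intros Ht.
  assert (Hchasles : forall s, 0 < s -> marcum_tail s = RInt marcum_integrand s 1 + marcum_tail 1).
  { intros s Hs. apply is_RInt_gen_unique.
    apply (is_RInt_gen_Chasles marcum_integrand 1 (RInt marcum_integrand s 1) (marcum_tail 1)).
    - apply is_RInt_gen_at_point, (RInt_correct (V := R_CompleteNormedModule)).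
      apply ex_RInt_marcum_integrand; lra.
    - apply is_RInt_gen_marcum_tail. lra. }
  apply (is_derive_ext_loc (fun s => RInt marcum_integrand s 1 + marcum_tail 1)).
  - apply locally_interval with 0 p_infty; [easy | easy |].
    intros s Hs _. symmetry. now apply Hchasles.
  - eapply is_derive_eq; [apply (is_derive_plus (K := R_AbsRing) (V := R_NormedModule)) |].
    + apply (is_derive_RInt' marcum_integrand _ t 1); [| now apply continuous_marcum_integrand].
      apply locally_interval with 0 p_infty; [easy | easy |].
      intros s Hs _. apply (RInt_correct (V := R_CompleteNormedModule)).
      apply ex_RInt_marcum_integrand; simpl in Hs; lra.
    + apply (is_derive_const (K := R_AbsRing) (V := R_NormedModule)).
    + change (opp (marcum_integrand t) + 0 = - marcum_integrand t). unfold opp; simpl. ring.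
Qed.

End MarcumIntegrand.

Lemma scal_R (a b : R) : scal a b = a * b.
Proof. reflexivity. Qed.

Lemma besselI_sqrt (nu u : R) : 0 < u ->
  besselI nu (2 * sqrt u) = Rpower (sqrt u) nu * besselS nu u.
Proof.
  intros Hu. unfold besselI, besselS, PSeries.
  rewrite (Rmult_comm (Rpower _ _)), <- Series_scal_r. apply Series_ext. intros k.
  replace (2 * sqrt u / 2) with (sqrt u) by field.
  rewrite pow_mult, pow2_sqrt by lra. unfold bessel_coef, Rdiv. ring.
Qed.

Lemma marcumQ_eq_tail (mu x s : R) : 1 <= mu -> 0 <= x -> 0 < s ->
  marcumQ mu x s = exp (- x) * marcum_tail (mu - 1) x s.
Proof.
  intros Hmu Hx Hs.
  assert (HJ := is_RInt_gen_marcum_tail (mu - 1) x ltac:(lra) Hx s Hs).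
  unfold marcumQ. destruct (Req_EM_T x 0) as [-> | Hx0].
  - assert (Hc0 : bessel_coef (mu - 1) 0 = / Gamma mu).
    { unfold bessel_coef. change (INR (fact 0)) with 1. change (INR 0) with 0.
      rewrite Rmult_1_l. do 2 f_equal. ring. }
    assert (HG := Gamma_pos mu Hmu).
    unfold upper_Gamma.
    rewrite (is_RInt_gen_unique _ (scal (Gamma mu) (marcum_tail (mu - 1) 0 s))).
    + rewrite scal_R. rewrite Ropp_0, exp_0. field. lra.
    + apply (is_RInt_gen_ext (fun t => scal (Gamma mu) (marcum_integrand (mu - 1) 0 t)));
        [| exact (is_RInt_gen_scal _ _ _ HJ)].
      exists (fun _ => True) (fun _ => True); [easy | now exists 0 |].
      intros a b _ _ t _. unfold marcum_integrand, besselS.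
      rewrite Rmult_0_l, PSeries_0, Hc0, scal_R. apply Rminus_diag_uniq. field. lra.
  - assert (Hxp : 0 < x) by lra.
    set (K := Rpower x ((mu - 1) / 2) * exp (- x)).
    rewrite (is_RInt_gen_unique _ (scal K (marcum_tail (mu - 1) x s))).
    + change (scal K ?b) with (K * b). unfold K.
      replace (Rpower x ((1 - mu) / 2)) with (/ Rpower x ((mu - 1) / 2))
        by (rewrite <- Rpower_Ropp; f_equal; field).
      generalize (Rpower_pos x ((mu - 1) / 2)). intros. field. lra.
    + apply (is_RInt_gen_ext (fun t => scal K (marcum_integrand (mu - 1) x t)));
        [| exact (is_RInt_gen_scal _ _ _ HJ)].
      exists (fun a => a = s) (fun b => s < b); [easy | now exists s |].
      intros a b -> Hb t Ht. simpl in Ht. rewrite Rmin_left in Ht by lra.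
      rewrite scal_R. unfold K, marcum_integrand.
      rewrite besselI_sqrt, <- Rpower_sqrt, Rpower_mult, <- Rpower_mult_distr
        by (try apply Rmult_lt_0_compat; lra).
      replace (Rpower t (mu - 1)) with (Rpower t ((mu - 1) / 2) * Rpower t ((mu - 1) / 2))
        by (rewrite <- Rpower_plus; f_equal; field).
      replace (/ 2 * (mu - 1)) with ((mu - 1) / 2) by field.
      replace (- t - x) with (- t + - x) by ring. rewrite exp_plus. apply Rminus_diag_uniq. ring.
Qed.

Lemma is_derive_marcumQ (mu x t : R) : 1 <= mu -> 0 <= x -> 0 < t ->
  is_derive (fun s => marcumQ mu x s) t (- exp (- x) * marcum_integrand (mu - 1) x t).
Proof.
  intros Hmu Hx Ht.
  apply (is_derive_ext_loc (fun s => exp (- x) * marcum_tail (mu - 1) x s)).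
  - apply locally_interval with 0 p_infty; [easy | easy |].
    intros s Hs _. symmetry. now apply marcumQ_eq_tail.
  - eapply is_derive_eq; [apply is_derive_scal, is_derive_marcum_tail; lra |].
    change (scal ?a ?b) with (a * b). ring.
Qed.

Lemma d2Q_dy2_marcumQ (mu x y : R) : 1 <= mu -> 0 <= x -> 0 < y ->
  d2Q_dy2 mu x y
    (exp (- x) * exp (- y) * Rpower y (mu - 2)
     * ((y - (mu - 1)) * besselS (mu - 1) (x * y) - x * y * besselS1 (mu - 1) (x * y))).
Proof.
  intros Hmu Hx Hy. exists (fun t => - exp (- x) * marcum_integrand (mu - 1) x t). split.
  - intros t Ht. now apply is_derive_marcumQ.
  - eapply is_derive_eq;
      [apply is_derive_scal, is_derive_marcum_integrand; lra |].
    change (scal ?a ?b) with (a * b). replace (mu - 1 - 1) with (mu - 2) by ring. ring.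
Qed.

Section Bracket.
Variables nu x y : R.
Hypothesis Hnu : 0 <= nu.
Hypothesis Hx : 0 <= x.
Hypothesis Hy : 0 < y.

Let F := besselS nu (x * y).
Let M := x * y * besselS1 nu (x * y).

Lemma bracket_data : 0 <= x * y /\ 0 < F /\ 0 <= M.
Proof.
  assert (Hxy : 0 <= x * y) by (apply Rmult_le_pos; lra).
  repeat split; [easy | now apply besselS_pos |].
  apply Rmult_le_pos; [easy | now apply besselS1_ge0].
Qed.

(* If the bracket were [<= 0], then [M >= (y - nu) F > 0] would contradict
   [M (M + nu F) <= x y F ^ 2]. *)
Lemma marcum_bracket_pos : x + nu < y -> 0 < (y - nu) * F - M.
Proof.
  intros Hxy. destruct bracket_data as [Hu [HF HM]].
  assert (HT : M * (M + nu * F) <= x * y * F ^ 2).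
  { generalize (turan0_le0 nu Hnu (x * y) Hu). unfold turan, M, F. lra. }
  apply Rnot_le_lt. intros Hle.
  assert (HyF : 0 < (y - nu) * F) by (apply Rmult_lt_0_compat; lra).
  assert ((y - nu) * F * ((y - nu) * F + nu * F) <= M * (M + nu * F))
    by (apply Rmult_le_compat; nra).
  assert (x * y * F ^ 2 < (y - nu) * y * F ^ 2)
    by (apply Rmult_lt_compat_r; [apply pow_lt | apply Rmult_lt_compat_r]; lra).
  nra.
Qed.

Lemma marcum_bracket_neg (c : R) : 1/2 <= c -> 1 - c <= nu -> y < x + nu - c ->
  (y - nu) * F - M < 0.
Proof.
  intros Hc Hcnu Hxy. destruct bracket_data as [Hu [HF HM]].
  assert (HT : x * y * F ^ 2 <= (M + c * F) * (M + nu * F)).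
  { generalize (turan_ge0 nu Hnu c (x * y) Hc Hcnu Hu). unfold turan, M, F. lra. }
  apply Rnot_le_lt. intros Hle.
  assert (Hynu : 0 <= y - nu) by nra.
  assert ((M + c * F) * (M + nu * F) <= ((y - nu) * F + c * F) * ((y - nu) * F + nu * F))
    by (apply Rmult_le_compat; nra).
  assert ((y - nu + c) * y * F ^ 2 < x * y * F ^ 2)
    by (apply Rmult_lt_compat_r; [apply pow_lt | apply Rmult_lt_compat_r]; lra).
  nra.
Qed.

End Bracket.

Theorem theorem2 (mu x y : R) (hmu : 1 <= mu) (hx : 0 <= x) (hy : 0 < y) :
  (y > x + mu - 1 -> exists d2, d2Q_dy2 mu x y d2 /\ d2 > 0) /\
  (y < x + mu - 2 -> exists d2, d2Q_dy2 mu x y d2 /\ d2 < 0) /\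
  (3 / 2 <= mu -> y < x + mu - 3 / 2 -> exists d2, d2Q_dy2 mu x y d2 /\ d2 < 0).
Proof.
  assert (Hfactor : 0 < exp (- x) * exp (- y) * Rpower y (mu - 2))
    by (repeat apply Rmult_lt_0_compat; auto using exp_pos, Rpower_pos).
  pose proof (d2Q_dy2_marcumQ mu x y hmu hx hy) as HD.
  pose proof (marcum_bracket_pos (mu - 1) x y ltac:(lra) hx hy) as Hpos.
  pose proof (marcum_bracket_neg (mu - 1) x y ltac:(lra) hx hy) as Hneg.
  split; [| split]; intros; eexists; (split; [exact HD |]).
  - apply Rmult_gt_0_compat; [easy | apply Hpos; lra].
  - apply Rmult_pos_neg; [easy | apply (Hneg 1); lra].
  - apply Rmult_pos_neg; [easy | apply (Hneg (1/2)); lra].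
Qed.
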